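(* Let $V$ be a real vector space with a symplectic form $\sigma$, let $\mathcal{L}(V)$ be the lattice of all linear subspaces of $V$ with symplectic complementation, and let $\mu:\mathcal{L}(V)\to[0,1]$ be a finitely additive probability measure. Let $H\in\mathcal{L}(V)$. (a) For every decomposition $H=Z(H)\oplus_\sigma K$, where $Z(H)=H\cap H'$ and $K\subset H$ is a subspace with $Z(H)\subset K'$ and $Z(H)\cap K=\{0\}$, one has $\mu(H)=\mu(K)$. (b) If $H$ is symplectic and $H=H_1\oplus_\sigma\cdots\oplus_\sigma H_n$ with symplectic planes $H_k$ satisfying $H_i\subset H_j'$ for $i\ne j$, then $\mu(H)=\sum_{k=1}^n\mu(H_k)$.
   Context: A symplectic form is a bilinear, antisymmetric, non-degenerate map $\sigma:V\times V\to\mathbb{R}$. For a subspace $H$, $H'=\{v\in V:\sigma(v,h)=0\ \forall h\in H\}$. $\mathcal{L}(V)$ is ordered by inclusion, with $H\vee K=H+K$ (no closure), $H\wedge K=H\cap K$, $0=\{0\}$, $1=V$. $H,K$ are separated if $H\subset K'$. $\oplus_\sigma$ denotes an algebraic direct sum of mutually separated subspaces. $H$ is symplectic if $H\cap H'=\{0\}$; a symplectic plane is a two-dimensional symplectic subspace. A finitely additive probability measure on $\mathcal{L}(V)$ is a map $\mu$ into $[0,1]$ with $\mu(\{0\})=0$, $\mu(V)=1$, monotone ($H\subset K\Rightarrow\mu(H)\le\mu(K)$), and $\mu(H_1+\dots+H_n)=\sum_k\mu(H_k)$ whenever $H_1,\dots,H_n$ are pairwise separated. *)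

From HB Require Import structures.
From mathcomp Require Import all_boot all_order all_algebra.
From mathcomp Require Import boolp classical_sets reals.
Set Implicit Arguments. Unset Strict Implicit. Unset Printing Implicit Defensive.
Import Order.TTheory GRing.Theory Num.Theory.
Local Open Scope ring_scope.
Local Open Scope classical_set_scope.

Section Symplectic.
Variables (R : realType) (V : lmodType R).

Definition symplectic_form (sigma : V -> V -> R) : Prop :=
  [/\ (forall (a : R) (u v w : V), sigma (a *: u + v) w = a * sigma u w + sigma v w),
      (forall (a : R) (u v w : V), sigma u (a *: v + w) = a * sigma u v + sigma u w),
      (forall u v : V, sigma u v = - sigma v u)
    & (forall v : V, (forall w : V, sigma v w = 0) -> v = 0)].

Definition subspace (H : set V) : Prop :=
  [/\ H 0, (forall u v, H u -> H v -> H (u + v))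
    & (forall (a : R) u, H u -> H (a *: u))].

Definition scompl (sigma : V -> V -> R) (H : set V) : set V :=
  [set v | forall h, H h -> sigma v h = 0].

Definition ssum (H K : set V) : set V :=
  [set v | exists h k, [/\ H h, K k & v = h + k]].

Definition bigssum (n : nat) (Hs : 'I_n -> set V) : set V :=
  [set v | exists f : 'I_n -> V, (forall k, Hs k (f k)) /\ v = \sum_(k < n) f k].

Definition separated (sigma : V -> V -> R) (H K : set V) : Prop :=
  H `<=` scompl sigma K.

Definition symplectic_subspace (sigma : V -> V -> R) (H : set V) : Prop :=
  subspace H /\ H `&` scompl sigma H = [set 0].

Definition dim2 (H : set V) : Prop :=
  exists u v : V,
    (forall a b : R, a *: u + b *: v = 0 -> a = 0 /\ b = 0) /\
    H = [set w | exists a b : R, w = a *: u + b *: v].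

Definition symplectic_plane (sigma : V -> V -> R) (H : set V) : Prop :=
  symplectic_subspace sigma H /\ dim2 H.

(* finitely additive probability measure on L(V) (values outside L(V) are irrelevant) *)
Definition fa_prob_measure (sigma : V -> V -> R) (mu : set V -> R) : Prop :=
  [/\ (forall H, subspace H -> 0 <= mu H <= 1),
      mu [set 0] = 0,
      mu setT = 1,
      (forall H K, subspace H -> subspace K -> H `<=` K -> mu H <= mu K)
    & (forall (n : nat) (Hs : 'I_n -> set V),
         (forall k, subspace (Hs k)) ->
         (forall i j, i != j -> separated sigma (Hs i) (Hs j)) ->
         mu (bigssum Hs) = \sum_(k < n) mu (Hs k))].

End Symplectic.

From HB Require Import structures.
From mathcomp Require Import all_boot all_order all_algebra.
From mathcomp Require Import boolp classical_sets reals.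
From mathcomp Require Import lra.
Import Order.TTheory GRing.Theory Num.Theory.
Set Implicit Arguments. Unset Strict Implicit.
Local Open Scope ring_scope.
Local Open Scope classical_set_scope.

(* The radical Z(H) = H ∩ H' is isotropic, i.e. separated from itself, so
   additivity applied to Z(H) + Z(H) = Z(H) gives mu(Z(H)) = 2 mu(Z(H)), hence
   mu(Z(H)) = 0; additivity on H = Z(H) + K then gives (a), without using
   K ⊆ H or Z(H) ∩ K = 0.  Part (b) is additivity itself. *)

Lemma sum_ord2 (M : nmodType) (f : 'I_2 -> M) :
  \sum_(i < 2) f i = f ord0 + f ord_max.
Proof. by rewrite big_ord_recr big_ord1; congr (f _ + _); exact: val_inj. Qed.

Section SymplecticMeasure.
Variables (R : realType) (V : lmodType R) (sigma : V -> V -> R).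

Lemma ssum_id (H : set V) : subspace H -> ssum H H = H.
Proof.
case=> H0 HD _; apply/seteqP; split=> [_ [h [k [Hh Hk ->]]]|v Hv]; first exact: HD.
by exists v, 0; rewrite addr0.
Qed.

Lemma subspaceI (H K : set V) :
  subspace H -> subspace K -> subspace (H `&` K).
Proof.
case=> H0 HD HZ [K0 KD KZ]; split=> [//|u v [Hu Ku] [Hv Kv]|a u [Hu Ku]].
- by split; [exact: HD | exact: KD].
- by split; [exact: HZ | exact: KZ].
Qed.

Definition pair_family (A B : set V) (i : 'I_2) : set V :=
  if val i == 0%N then A else B.

Lemma bigssum_pair (A B : set V) : bigssum (pair_family A B) = ssum A B.
Proof.
apply/seteqP; split=> [_ [f [Af ->]]|_ [a [b [Aa Bb ->]]]].
  exists (f ord0), (f ord_max).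
  by rewrite sum_ord2; split; [exact: Af ord0 | exact: Af ord_max |].
exists (fun i : 'I_2 => if val i == 0%N then a else b); rewrite sum_ord2.
by split=> // -[[|[|//]] ?].
Qed.

Section Measure.
Variable mu : set V -> R.
Hypothesis hmu : fa_prob_measure sigma mu.

Lemma fa_prob_measure_ssum (A B : set V) :
  subspace A -> subspace B ->
  separated sigma A B -> separated sigma B A ->
  mu (ssum A B) = mu A + mu B.
Proof.
move=> sA sB sepAB sepBA; case: hmu => _ _ _ _ mu_add.
rewrite -bigssum_pair mu_add ?sum_ord2 //; first by move=> -[[|[|//]] ?].
by move=> [[|[|//]] ?] [[|[|//]] ?].
Qed.

Lemma fa_prob_measure_isotropic_eq0 (Z : set V) :
  subspace Z -> separated sigma Z Z -> mu Z = 0.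
Proof.
move=> sZ sepZ; have := fa_prob_measure_ssum sZ sZ sepZ sepZ.
rewrite ssum_id //; lra.
Qed.

End Measure.

Lemma radical_isotropic (H : set V) :
  separated sigma (H `&` scompl sigma H) (H `&` scompl sigma H).
Proof. by move=> z [_ Cz] z' [Hz _]; exact: Cz. Qed.

Section Form.
Hypothesis hsigma : symplectic_form sigma.

Lemma sigma0l (w : V) : sigma 0 w = 0.
Proof.
case: hsigma => linl _ _ _.
have := linl 1 0 0 w; rewrite scale1r addr0 mul1r; lra.
Qed.

Lemma subspace_scompl (H : set V) : subspace (scompl sigma H).
Proof.
case: hsigma => linl _ _ _; split=> [h _|u v Hu Hv h Hh|a u Hu h Hh].
- exact: sigma0l.
- by have := linl 1 u v h; rewrite scale1r mul1r Hu // Hv // addr0.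
- by have := linl a u 0 h; rewrite !addr0 Hu // sigma0l // mulr0 addr0.
Qed.

Lemma separated_sym (H K : set V) :
  separated sigma H K -> separated sigma K H.
Proof. by case: hsigma => _ _ asym _ sepHK k Kk h Hh; rewrite asym sepHK // oppr0. Qed.

End Form.
End SymplecticMeasure.

Theorem lemmaB1 (R : realType) (V : lmodType R) (sigma : V -> V -> R)
  (hsigma : symplectic_form sigma) (mu : set V -> R)
  (hmu : fa_prob_measure sigma mu) (H : set V) (hH : subspace H) :
  (* (a) *)
  (forall K : set V,
     subspace K -> K `<=` H ->
     H `&` scompl sigma H `<=` scompl sigma K ->
     (H `&` scompl sigma H) `&` K = [set 0] ->
     H = ssum (H `&` scompl sigma H) K ->
     mu H = mu K) /\
  (* (b) *)
  (symplectic_subspace sigma H ->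
   forall (n : nat) (Hs : 'I_n -> set V),
     (forall k, symplectic_plane sigma (Hs k)) ->
     (forall i j, i != j -> Hs i `<=` scompl sigma (Hs j)) ->
     H = bigssum Hs ->
     mu H = \sum_(k < n) mu (Hs k)).
Proof.
split=> [K sK _ sepZK _ ->|_ n Hs planes sepHs ->].
  have sZ := subspaceI hH (subspace_scompl hsigma H).
  rewrite (fa_prob_measure_ssum hmu sZ sK sepZK (separated_sym hsigma sepZK)).
  by rewrite (fa_prob_measure_isotropic_eq0 hmu sZ) ?add0r //; exact: radical_isotropic.
case: hmu => _ _ _ _ mu_add; apply: mu_add sepHs => k.
by case: (planes k) => -[].
Qed.
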